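(* Let $k<-2$ be fixed and $p\neq 0$ real. The inequality $$\frac{2}{k+2}\left( \frac{\sinh x}{x}\right) ^{kp}+\frac{k}{k+2}\left( \frac{\tanh x}{x}\right) ^{p}<1$$ holds for all $x\in (0,\infty)$ if and only if $p<0$ or $p\geq -\dfrac{12}{5(k+2)}$. *)

From Stdlib Require Import Reals.
Open Scope R_scope.

From Stdlib Require Import Reals Lra Lia Psatz ZArith List.
Import ListNotations.
From Coquelicot Require Import Coquelicot.
Open Scope R_scope.

(* Put u = ln (sinh x / x), v = ln (x cosh x / sinh x) and lam = -2/k in (0, 1).  Then
   (tanh x / x) ^ p = exp (- p v), and the inequality reads
     exp (- p v) < 1 - lam (1 - exp (- K / lam)),   K = 2 p u,
   where the right-hand side decreases in lam for every K <> 0.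
   - p < 0: Lazarevic's inequality cosh x <= (sinh x / x) ^ 3 gives v <= 2 u, and the claim is
     the comparison of lam with 1.
   - p >= -12 / (5 (k + 2)): then lam <= q / (q + 1) with q = 5 p / 6, and the claim follows from
     v > 5/6 (1 - exp (- 12 u / 5)), an elementary inequality for exp, and that comparison.
     The bound on v holds because the difference of its sides vanishes at 0 and increases.
   - 0 < p < -12 / (5 (k + 2)): near x = 0 the left-hand side minus the right-hand side is
     p (1/15 + p (k + 2) / 36) x ^ 4 + O (x ^ 6) > 0, so the inequality fails for small x.
   Every hyperbolic inequality used is proved by expanding it into a power series of x and
   checking the sign of each (integer-scaled) Taylor coefficient. *)

Lemma is_series_exp (y : R) : is_series (fun n => y ^ n / INR (fact n)) (exp y).
Proof.
  eapply is_series_ext; [|exact (is_exp_Reals y)].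
  intro n. unfold scal; simpl. unfold mult; simpl. rewrite pow_n_pow. reflexivity.
Qed.

Lemma is_series_of_partial_sums_subseq (a b : nat -> R) (phi : nat -> nat) l :
  is_series a l -> (forall n, (n <= phi n)%nat) ->
  (forall n, sum_n b n = sum_n a (phi n)) -> is_series b l.
Proof.
  intros Ha Hphi Hsum. change (is_lim_seq (sum_n b) l).
  apply (is_lim_seq_ext (fun n => sum_n a (phi n))); [auto|].
  apply (is_lim_seq_subseq (sum_n a) l phi); [|exact Ha].
  intros P [N HN]. exists N. intros n Hn. apply HN. specialize (Hphi n). lia.
Qed.

Lemma is_series_even_terms (a : nat -> R) l :
  is_series a l -> (forall m, a (S (2 * m)) = 0) -> is_series (fun m => a (2 * m)%nat) l.
Proof.
  intros Ha Hodd. apply (is_series_of_partial_sums_subseq a _ (fun n => 2 * n)%nat l Ha).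
  - intro; lia.
  - induction n as [|n IH]; [reflexivity|].
    replace (2 * S n)%nat with (S (S (2 * n))) by lia.
    rewrite !sum_Sn, IH, Hodd. unfold plus; simpl.
    rewrite Rplus_0_r. do 3 f_equal. lia.
Qed.

Lemma is_series_odd_terms (a : nat -> R) l :
  is_series a l -> (forall m, a (2 * m)%nat = 0) -> is_series (fun m => a (S (2 * m))) l.
Proof.
  intros Ha Heven. apply (is_series_of_partial_sums_subseq a _ (fun n => S (2 * n)) l Ha).
  - intro; lia.
  - induction n as [|n IH].
    + rewrite sum_Sn, !sum_O. change (a 0%nat) with (a (2 * 0)%nat). rewrite Heven.
      unfold plus; simpl. ring.
    + replace (S (2 * S n)) with (S (S (S (2 * n)))) by lia.
      rewrite sum_Sn, IH, (sum_Sn a (S (S (2 * n)))), (sum_Sn a (S (2 * n))).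
      replace (S (S (2 * n))) with (2 * S n)%nat by lia.
      rewrite Heven. unfold plus; simpl. ring.
Qed.

Lemma pow_opp_even (y : R) m : (- y) ^ (2 * m) = y ^ (2 * m).
Proof. rewrite !pow_mult. f_equal. ring. Qed.

Lemma pow_opp_odd (y : R) m : (- y) ^ S (2 * m) = - y ^ S (2 * m).
Proof.
  replace (- y) with (-1 * y) by ring. rewrite Rpow_mult_distr, pow_1_odd. ring.
Qed.

Lemma is_series_cosh (y : R) :
  is_series (fun m => y ^ (2 * m) / INR (fact (2 * m))) (cosh y).
Proof.
  pose proof (is_series_scal (/ 2) _ _
    (is_series_plus _ _ _ _ (is_series_exp y) (is_series_exp (- y)))) as H.
  apply is_series_even_terms in H.
  - eapply is_series_ext; [|replace (cosh y) with (scal (/ 2) (plus (exp y) (exp (- y))));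
      [exact H|]].
    + intro m. cbv beta. rewrite pow_opp_even.
      pose proof (INR_fact_neq_0 (2 * m)). set (F := INR (fact (2 * m))) in *.
      unfold scal, plus; simpl. unfold mult; simpl. field. assumption.
    + unfold cosh, scal, plus; simpl. unfold mult; simpl. field.
  - intro m. cbv beta. rewrite pow_opp_odd. unfold scal, plus; simpl. unfold mult; simpl.
    unfold Rdiv. ring.
Qed.

Lemma is_series_sinh (y : R) :
  is_series (fun m => y ^ S (2 * m) / INR (fact (S (2 * m)))) (sinh y).
Proof.
  pose proof (is_series_scal (/ 2) _ _
    (is_series_minus _ _ _ _ (is_series_exp y) (is_series_exp (- y)))) as H.
  apply is_series_odd_terms in H.
  - eapply is_series_ext; [|replace (sinh y) with (scal (/ 2) (minus (exp y) (exp (- y))));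
      [exact H|]].
    + intro m. cbv beta. rewrite pow_opp_odd.
      pose proof (INR_fact_neq_0 (S (2 * m))). set (F := INR (fact (S (2 * m)))) in *.
      unfold scal, minus, plus, opp; simpl. unfold mult; simpl. field. assumption.
    + unfold sinh, scal, minus, plus, opp; simpl. unfold mult; simpl. field.
  - intro m. cbv beta. rewrite pow_opp_even. unfold scal, minus, plus, opp; simpl.
    unfold mult; simpl. ring.
Qed.

Lemma is_series_shift (a : nat -> R) (l : R) d :
  is_series a l -> is_series (fun n => if (d <=? n)%nat then a (n - d)%nat else 0) l.
Proof.
  intro Ha. induction d as [|d IH].
  - eapply is_series_ext; [|exact Ha]. intro n. simpl. f_equal. lia.
  - apply is_series_decr_1. simpl.
    match goal with |- is_series _ ?L => replace L with l; [exact IH|] end.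
    unfold plus, opp; simpl; lra.
Qed.

Lemma is_series_ge_term (a : nat -> R) l n :
  is_series a l -> (forall m, 0 <= a m) -> a n <= l.
Proof.
  intros Hl Ha.
  assert (Hpartial : forall m, a m <= sum_n a m).
  { intros [|m]; [rewrite sum_O; lra|].
    rewrite sum_Sn. change (plus ?u ?v) with (u + v).
    enough (0 <= sum_n a m) by lra.
    induction m as [|m IH]; [rewrite sum_O; auto|].
    rewrite sum_Sn. change (plus ?u ?v) with (u + v). specialize (Ha (S m)). lra. }
  apply (Rle_trans _ (sum_n a n)); [apply Hpartial|].
  apply (is_lim_seq_incr_compare (sum_n a) l); [exact Hl|].
  intro m. rewrite sum_Sn. change (plus ?u ?v) with (u + v). specialize (Ha (S m)). lra.
Qed.

(** * Hyperbolic sums with integer Taylor coefficients *)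

(* The parity choice makes [hyp_term k j] an even function, i.e. a power series in [x ^ 2]. *)
Definition hyp_term (k : nat) (j : Z) (x : R) : R :=
  x ^ k * (if Nat.even k then cosh (IZR j * x) else sinh (IZR j * x)).

Definition hyp_term_coef (k : nat) (j : Z) (M : nat) : R :=
  if (k <=? 2 * M)%nat then IZR j ^ (2 * M - k) / INR (fact (2 * M - k)) else 0.

Lemma is_series_hyp_term k j x :
  is_series (fun M => hyp_term_coef k j M * x ^ (2 * M)) (hyp_term k j x).
Proof.
  unfold hyp_term. destruct (Nat.even k) eqn:Hk.
  - apply Nat.even_spec in Hk as [a ->].
    pose proof (is_series_shift _ _ a (is_series_scal (x ^ (2 * a)) _ _
      (is_series_cosh (IZR j * x)))) as H.
    eapply is_series_ext; [|exact H]. intro M. unfold hyp_term_coef.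
    change (scal ?u ?v) with (Rmult u v). match goal with |- ?u = ?v => change (@eq R u v) end.
    destruct (Nat.leb_spec a M); destruct (Nat.leb_spec (2 * a) (2 * M)); try lia; [|ring].
    replace (2 * M - 2 * a)%nat with (2 * (M - a))%nat by lia.
    replace (x ^ (2 * M)) with (x ^ (2 * a) * x ^ (2 * (M - a)))
      by (rewrite <- pow_add; f_equal; lia).
    rewrite Rpow_mult_distr. field. apply INR_fact_neq_0.
  - assert (Hodd : Nat.odd k = true) by (rewrite <- Nat.negb_even, Hk; reflexivity).
    apply Nat.odd_spec in Hodd as [a ->].
    pose proof (is_series_shift _ _ (S a) (is_series_scal (x ^ (2 * a + 1)) _ _
      (is_series_sinh (IZR j * x)))) as H.
    eapply is_series_ext; [|exact H]. intro M. unfold hyp_term_coef.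
    change (scal ?u ?v) with (Rmult u v). match goal with |- ?u = ?v => change (@eq R u v) end.
    destruct (Nat.leb_spec (S a) M); destruct (Nat.leb_spec (2 * a + 1) (2 * M)); try lia;
      [|ring].
    replace (2 * M - (2 * a + 1))%nat with (S (2 * (M - S a))) by lia.
    replace (x ^ (2 * M)) with (x ^ (2 * a + 1) * x ^ S (2 * (M - S a)))
      by (rewrite <- pow_add; f_equal; lia).
    rewrite Rpow_mult_distr. field. apply INR_fact_neq_0.
Qed.

(* Integer data, so that the Taylor coefficients of a [hyp_sum] can be checked by computation. *)
Inductive hyp_mono := HypMono (c : Z) (k : nat) (j : Z).
Arguments HypMono c%_Z k%_nat j%_Z.

Fixpoint hyp_sum (l : list hyp_mono) (x : R) : R :=
  match l with
  | nil => 0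
  | HypMono c k j :: l => IZR c * hyp_term k j x + hyp_sum l x
  end.

Fixpoint hyp_sum_coef (l : list hyp_mono) (M : nat) : R :=
  match l with
  | nil => 0
  | HypMono c k j :: l => IZR c * hyp_term_coef k j M + hyp_sum_coef l M
  end.

Lemma is_series_hyp_sum l x :
  is_series (fun M => hyp_sum_coef l M * x ^ (2 * M)) (hyp_sum l x).
Proof.
  induction l as [|[c k j] l IH]; cbn [hyp_sum hyp_sum_coef].
  - change (is_lim_seq (sum_n (fun M => 0 * x ^ (2 * M))) 0).
    apply (is_lim_seq_ext (fun _ => 0)); [|apply is_lim_seq_const].
    intro n. rewrite (sum_n_ext _ (fun _ => 0)), sum_n_const.
    + change (0 = INR (S n) * 0). ring.
    + intro m. change (0 * x ^ (2 * m) = 0). ring.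
  - pose proof (is_series_plus _ _ _ _
      (is_series_scal (IZR c) _ _ (is_series_hyp_term k j x)) IH) as H.
    eapply is_series_ext; [|exact H]. intro M. unfold scal, plus; simpl. unfold mult; simpl.
    ring.
Qed.

Fixpoint ffact_Z (n k : nat) : Z :=
  match k with
  | O => 1
  | S k' => ffact_Z n k' * (Z.of_nat n - Z.of_nat k')
  end%Z.

Lemma fact_ffact_Z n k : (k <= n)%nat -> INR (fact n) = IZR (ffact_Z n k) * INR (fact (n - k)).
Proof.
  induction k as [|k IH]; intro Hk; simpl.
  - rewrite Nat.sub_0_r. ring.
  - rewrite IH by lia. replace (n - k)%nat with (S (n - S k)) by lia.
    rewrite fact_simpl, mult_INR, mult_IZR, minus_IZR, <- !INR_IZR_INZ, S_INR, minus_INR by lia.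
    rewrite S_INR. ring.
Qed.

Lemma ffact_Z_gt n k : (n < k)%nat -> ffact_Z n k = 0%Z.
Proof.
  induction k as [|k IH]; intro Hk; [lia|simpl].
  destruct (Nat.eq_dec n k) as [->|Hne]; [ring|]. rewrite IH by lia. ring.
Qed.

Fixpoint hyp_sum_icoef (l : list hyp_mono) (M : nat) : Z :=
  match l with
  | nil => 0
  | HypMono c k j :: l => c * ffact_Z (2 * M) k * j ^ Z.of_nat (2 * M - k) + hyp_sum_icoef l M
  end%Z.

Lemma hyp_sum_coef_icoef l M : hyp_sum_coef l M * INR (fact (2 * M)) = IZR (hyp_sum_icoef l M).
Proof.
  induction l as [|[c k j] l IH]; cbn [hyp_sum_coef hyp_sum_icoef]; [ring|].
  rewrite plus_IZR, <- IH, !mult_IZR, <- pow_IZR. unfold hyp_term_coef.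
  destruct (Nat.leb_spec k (2 * M)).
  - rewrite (fact_ffact_Z (2 * M) k) by assumption. field. apply INR_fact_neq_0.
  - rewrite ffact_Z_gt by lia. simpl. ring.
Qed.

Lemma hyp_sum_coef_nonneg l M : (0 <= hyp_sum_icoef l M)%Z -> 0 <= hyp_sum_coef l M.
Proof.
  intro H. pose proof (INR_fact_lt_0 (2 * M)).
  enough (0 <= hyp_sum_coef l M * INR (fact (2 * M))) by nra.
  rewrite hyp_sum_coef_icoef. now apply IZR_le.
Qed.

Lemma hyp_sum_coef_pos l M : (0 < hyp_sum_icoef l M)%Z -> 0 < hyp_sum_coef l M.
Proof.
  intro H. pose proof (INR_fact_lt_0 (2 * M)).
  enough (0 < hyp_sum_coef l M * INR (fact (2 * M))) by nra.
  rewrite hyp_sum_coef_icoef. now apply IZR_lt.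
Qed.

Lemma hyp_sum_icoef_nonneg l n :
  forallb (fun M => Z.leb 0 (hyp_sum_icoef l M)) (seq 0 n) = true ->
  (forall M, (n <= M)%nat -> (0 <= hyp_sum_icoef l M)%Z) ->
  forall M, (0 <= hyp_sum_icoef l M)%Z.
Proof.
  intros Hsmall Hlarge M. destruct (Nat.lt_ge_cases M n); [|auto].
  rewrite forallb_forall in Hsmall. apply Z.leb_le, Hsmall, in_seq. lia.
Qed.

Lemma hyp_sum_ge_term l x M0 :
  (forall M, (0 <= hyp_sum_icoef l M)%Z) -> hyp_sum_coef l M0 * x ^ (2 * M0) <= hyp_sum l x.
Proof.
  intro H. apply (is_series_ge_term _ _ M0 (is_series_hyp_sum l x)).
  intro M. apply Rmult_le_pos; [now apply hyp_sum_coef_nonneg|].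
  rewrite pow_mult. apply pow_le, pow2_ge_0.
Qed.

Lemma hyp_sum_nonneg l x : (forall M, (0 <= hyp_sum_icoef l M)%Z) -> 0 <= hyp_sum l x.
Proof.
  intro H. eapply Rle_trans; [|apply (hyp_sum_ge_term l x 0 H)].
  rewrite Rmult_1_r. now apply hyp_sum_coef_nonneg.
Qed.

Lemma hyp_sum_pos l x M0 :
  (forall M, (0 <= hyp_sum_icoef l M)%Z) -> (0 < hyp_sum_icoef l M0)%Z -> x <> 0 ->
  0 < hyp_sum l x.
Proof.
  intros H H0 Hx. eapply Rlt_le_trans; [|apply (hyp_sum_ge_term l x M0 H)].
  apply Rmult_lt_0_compat; [now apply hyp_sum_coef_pos|].
  rewrite pow_mult. apply pow_lt. nra.
Qed.

Lemma exp_IZR_pos_mul (p : positive) x : exp (IZR (Zpos p) * x) = exp x ^ Pos.to_nat p.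
Proof.
  rewrite <- positive_nat_Z, <- INR_IZR_INZ. induction (Pos.to_nat p) as [|n IH].
  - simpl. rewrite Rmult_0_l, exp_0. ring.
  - rewrite S_INR, Rmult_plus_distr_r, exp_plus, IH. simpl. rewrite Rmult_1_l. ring.
Qed.

Lemma cosh_IZR_pos_mul (p : positive) x :
  cosh (IZR (Zpos p) * x) = (exp x ^ Pos.to_nat p + / exp x ^ Pos.to_nat p) / 2.
Proof. unfold cosh. rewrite <- exp_IZR_pos_mul, <- exp_Ropp. reflexivity. Qed.

Lemma sinh_IZR_pos_mul (p : positive) x :
  sinh (IZR (Zpos p) * x) = (exp x ^ Pos.to_nat p - / exp x ^ Pos.to_nat p) / 2.
Proof. unfold sinh. rewrite <- exp_IZR_pos_mul, <- exp_Ropp. reflexivity. Qed.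

Lemma cosh_IZR0_mul x : cosh (IZR 0 * x) = 1.
Proof. rewrite Rmult_0_l. unfold cosh. rewrite Ropp_0, exp_0. field. Qed.

(* Proves [hyp_sum l x = e] for an explicit [l] and a closed form [e] in [x], [cosh x],
   [sinh x], by rewriting everything as a rational function of [exp x]. *)
Ltac hyp_sum_closed_form :=
  cbn [hyp_sum]; unfold hyp_term; cbn [Nat.even];
  rewrite ?cosh_IZR_pos_mul, ?sinh_IZR_pos_mul, ?cosh_IZR0_mul;
  unfold cosh, sinh; rewrite ?exp_Ropp;
  repeat match goal with |- context [Pos.to_nat ?p] =>
    let v := eval compute in (Pos.to_nat p) in change (Pos.to_nat p) with v end;
  field; apply Rgt_not_eq, exp_pos.

Open Scope Z_scope.

Lemma Zpow_sub_split j N k K :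
  0 <= 2 * N - K -> 0 <= K - k -> j ^ (2 * N - k) = j ^ (2 * N - K) * j ^ (K - k).
Proof. intros. rewrite <- Z.pow_add_r by lia. f_equal. ring. Qed.

(* Normalizes [hyp_sum_icoef l M] for an explicit [l] to a polynomial in [N = Z.of_nat M],
   falling factorials written out, and every power [j ^ (2 N - k)] written as
   [j ^ (2 N - K)] times a constant. *)
Ltac hyp_icoef_normalize M K :=
  cbn [hyp_sum_icoef ffact_Z]; rewrite !Nat2Z.inj_sub by lia; rewrite !Nat2Z.inj_mul;
  let N := fresh "N" in set (N := Z.of_nat M);
  simpl Z.of_nat; rewrite ?Z.pow_1_l by lia; rewrite ?Z.pow_0_l by lia;
  repeat match goal with |- context [?j ^ (2 * N - ?k)] =>
    let b := eval compute in (Z.eqb k K) in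
    match b with false => rewrite (Zpow_sub_split j N k K) by lia end end;
  repeat match goal with |- context [Z.pow ?j (?a - ?b)] =>
    match a with (2 * _)%Z => fail 1 | _ =>
      let v := eval compute in (Z.pow j (a - b)) in change (Z.pow j (a - b)) with v end end.

Close Scope Z_scope.

(** * Hyperbolic inequalities *)

Lemma cosh_pos x : 0 < cosh x.
Proof. unfold cosh. pose proof (exp_pos x). pose proof (exp_pos (- x)). lra. Qed.

Lemma cosh_sq_sub_sinh_sq x : cosh x ^ 2 - sinh x ^ 2 = 1.
Proof.
  unfold cosh, sinh. rewrite exp_Ropp. pose proof (exp_pos x). field. lra.
Qed.

Lemma x_lt_sinh x : 0 < x -> x < sinh x.
Proof.
  intro Hx. pose (l := [HypMono 1 1 1; HypMono (-1) 2 0]).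
  assert (Hl : forall M, (0 <= hyp_sum_icoef l M)%Z).
  { apply (hyp_sum_icoef_nonneg l 2); [vm_compute; reflexivity|].
    intros M HM. subst l. hyp_icoef_normalize M 1%Z. nia. }
  pose proof (hyp_sum_pos l x 2 Hl ltac:(vm_compute; reflexivity) ltac:(lra)) as H.
  replace (hyp_sum l x) with (x * (sinh x - x)) in H by (subst l; hyp_sum_closed_form).
  nra.
Qed.

Lemma sinh_lt_x_mul_cosh x : 0 < x -> sinh x < x * cosh x.
Proof.
  intro Hx. pose (l := [HypMono 1 2 1; HypMono (-1) 1 1]).
  assert (Hl : forall M, (0 <= hyp_sum_icoef l M)%Z).
  { apply (hyp_sum_icoef_nonneg l 2); [vm_compute; reflexivity|].
    intros M HM. subst l. hyp_icoef_normalize M 1%Z. nia. }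
  pose proof (hyp_sum_pos l x 2 Hl ltac:(vm_compute; reflexivity) ltac:(lra)) as H.
  replace (hyp_sum l x) with (x * (x * cosh x - sinh x)) in H by (subst l; hyp_sum_closed_form).
  nra.
Qed.

Lemma x_lt_sinh_mul_cosh x : 0 < x -> x < sinh x * cosh x.
Proof.
  intro Hx. pose (l := [HypMono 1 1 2; HypMono (-2) 2 0]).
  assert (Hl : forall M, (0 <= hyp_sum_icoef l M)%Z).
  { apply (hyp_sum_icoef_nonneg l 2); [vm_compute; reflexivity|].
    intros M HM. subst l. hyp_icoef_normalize M 1%Z.
    assert (0 <= 2 ^ (2 * N - 1))%Z by (apply Z.pow_nonneg; lia). nia. }
  pose proof (hyp_sum_pos l x 2 Hl ltac:(vm_compute; reflexivity) ltac:(lra)) as H.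
  replace (hyp_sum l x) with (2 * x * (sinh x * cosh x - x)) in H
    by (subst l; hyp_sum_closed_form).
  nra.
Qed.

Lemma sinh_ge_taylor5 x : 0 < x -> x + x ^ 3 / 6 + x ^ 5 / 120 <= sinh x.
Proof.
  intro Hx. pose (l := [HypMono 120 1 1; HypMono (-120) 2 0; HypMono (-20) 4 0;
                        HypMono (-1) 6 0]).
  assert (Hl : forall M, (0 <= hyp_sum_icoef l M)%Z).
  { apply (hyp_sum_icoef_nonneg l 4); [vm_compute; reflexivity|].
    intros M HM. subst l. hyp_icoef_normalize M 1%Z. nia. }
  pose proof (hyp_sum_nonneg l x Hl) as H.
  replace (hyp_sum l x) with (120 * x * (sinh x - (x + x ^ 3 / 6 + x ^ 5 / 120))) in H
    by (subst l; hyp_sum_closed_form).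
  nra.
Qed.

Lemma cosh_sub_one_le x : 2 * (cosh x - 1) <= x ^ 2 * cosh x.
Proof.
  pose (l := [HypMono 1 2 1; HypMono (-2) 0 1; HypMono 2 0 0]).
  assert (Hl : forall M, (0 <= hyp_sum_icoef l M)%Z).
  { apply (hyp_sum_icoef_nonneg l 2); [vm_compute; reflexivity|].
    intros M HM. subst l. hyp_icoef_normalize M 1%Z. nia. }
  pose proof (hyp_sum_nonneg l x Hl) as H.
  replace (hyp_sum l x) with (x ^ 2 * cosh x - 2 * (cosh x - 1)) in H
    by (subst l; hyp_sum_closed_form).
  lra.
Qed.

Lemma Zpow3_ge_cubic e : (9 <= e)%Z -> (4 * (e + 1) ^ 3 + 3 <= 3 ^ e)%Z.
Proof.
  revert e. apply (Z.le_ind (fun e => 4 * (e + 1) ^ 3 + 3 <= 3 ^ e)%Z);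
    [intros ? ? ->; reflexivity|vm_compute; discriminate|].
  intros e He IH. rewrite Z.pow_succ_r by lia.
  assert (4 * (Z.succ e + 1) ^ 3 + 3 <= 3 * (4 * (e + 1) ^ 3 + 3))%Z; [|lia].
  assert (81 * e <= e ^ 3)%Z by nia. unfold Z.succ. ring_simplify. lia.
Qed.

Lemma pow3_mul_cosh_le_sinh_pow3 x : 0 < x -> x ^ 3 * cosh x <= sinh x ^ 3.
Proof.
  intro Hx. pose (l := [HypMono 1 1 3; HypMono (-3) 1 1; HypMono (-4) 4 1]).
  assert (Hl : forall M, (0 <= hyp_sum_icoef l M)%Z).
  { apply (hyp_sum_icoef_nonneg l 5); [vm_compute; reflexivity|].
    intros M HM. subst l. hyp_icoef_normalize M 1%Z.
    assert (HN : (5 <= N)%Z) by lia.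
    pose proof (Zpow3_ge_cubic (2 * N - 1) ltac:(lia)) as Hpow.
    replace (2 * N - 1 + 1)%Z with (2 * N)%Z in Hpow by ring.
    set (a := (3 ^ (2 * N - 1))%Z) in *. clearbody a N.
    assert ((2 * N) * (2 * N - 1) * (2 * N - 2) * (2 * N - 3) <= (2 * N) ^ 4)%Z by nia.
    assert ((2 * N) * (4 * (2 * N) ^ 3 + 3) <= (2 * N) * a)%Z by nia.
    lia. }
  pose proof (hyp_sum_nonneg l x Hl) as H.
  replace (hyp_sum l x) with (4 * x * (sinh x ^ 3 - x ^ 3 * cosh x)) in H
    by (subst l; hyp_sum_closed_form).
  nra.
Qed.

Lemma xcosh_le_sinh_mul_poly x :
  0 < x -> x * cosh x <= sinh x * (1 + x ^ 2 / 3 - x ^ 4 / 45 + x ^ 6 / 45).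
Proof.
  intro Hx. pose (l := [HypMono 45 1 1; HypMono 15 3 1; HypMono (-1) 5 1; HypMono 1 7 1;
                        HypMono (-45) 2 1]).
  assert (Hl : forall M, (0 <= hyp_sum_icoef l M)%Z).
  { apply (hyp_sum_icoef_nonneg l 4); [vm_compute; reflexivity|].
    intros M HM. subst l. hyp_icoef_normalize M 1%Z.
    rewrite !Z.mul_1_l, !Z.mul_1_r, !Z.sub_0_r.
    assert (Hn : (8 <= 2 * N)%Z) by lia. set (n := (2 * N)%Z) in *. clearbody n.
    set (F5 := (n * (n - 1) * (n - 2) * (n - 3) * (n - 4))%Z).
    assert (0 <= F5)%Z by (subst F5; nia).
    set (F2 := (n * (n - 1))%Z) in *.
    assert (0 <= F2)%Z by (subst F2; nia).
    assert (F5 <= F5 * (n - 5) * (n - 6))%Z by nia.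
    assert (3 * F2 <= F2 * (n - 2))%Z by nia.
    clearbody F2 F5. nia. }
  pose proof (hyp_sum_nonneg l x Hl) as H.
  replace (hyp_sum l x)
    with (45 * x * (sinh x * (1 + x ^ 2 / 3 - x ^ 4 / 45 + x ^ 6 / 45) - x * cosh x)) in H
    by (subst l; hyp_sum_closed_form).
  nra.
Qed.

Lemma Zpow5_ge_quartic_mul_pow3 e : (28 <= e)%Z -> ((e + 4) ^ 4 * 3 ^ e <= 5 ^ e)%Z.
Proof.
  revert e. apply (Z.le_ind (fun e => (e + 4) ^ 4 * 3 ^ e <= 5 ^ e)%Z);
    [intros ? ? ->; reflexivity|vm_compute; discriminate|].
  intros e He IH. rewrite !Z.pow_succ_r by lia.
  assert (3 * (Z.succ e + 4) ^ 4 <= 5 * (e + 4) ^ 4)%Z.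
  { assert (0 <= (e - 8) ^ 2)%Z by nia. assert (0 <= (e - 8) ^ 3)%Z by nia.
    assert (0 <= (e - 8) ^ 4)%Z by nia. unfold Z.succ. nia. }
  pose proof (Z.pow_nonneg 3 e ltac:(lia)). nia.
Qed.

Definition sinh_cosh_key_terms : list hyp_mono :=
  [HypMono 5 0 5; HypMono (-15) 0 3; HypMono 10 0 1; HypMono (-20) 1 3; HypMono 60 1 1;
   HypMono (-32) 4 2; HypMono (-32) 4 0; HypMono (-24) 3 3; HypMono (-24) 3 1;
   HypMono 32 3 2; HypMono 24 2 3; HypMono (-24) 2 1].

(* Beyond the 16 coefficients checked by computation, the term [5 ^ (2 M)] dominates. *)
Lemma sinh_cosh_key_icoef_nonneg M : (0 <= hyp_sum_icoef sinh_cosh_key_terms M)%Z.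
Proof.
  apply (hyp_sum_icoef_nonneg _ 16); [vm_compute; reflexivity|]. clear M.
  intros M HM. unfold sinh_cosh_key_terms. hyp_icoef_normalize M 4%Z.
  rewrite ?Z.mul_1_l, ?Z.mul_1_r, ?Z.mul_0_r, ?Z.sub_0_r.
  assert (Hn : (32 <= 2 * N)%Z) by lia.
  pose proof (Zpow5_ge_quartic_mul_pow3 (2 * N - 4) ltac:(lia)) as Hgrowth.
  replace (2 * N - 4 + 4)%Z with (2 * N)%Z in Hgrowth by ring.
  assert (H23 : (0 <= 2 ^ (2 * N - 4) <= 3 ^ (2 * N - 4))%Z)
    by (split; [apply Z.pow_nonneg|apply Z.pow_le_mono_l]; lia).
  assert (H3 : (0 < 3 ^ (2 * N - 4))%Z) by (apply Z.pow_pos_nonneg; lia).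
  set (n := (2 * N)%Z) in *. set (a5 := (5 ^ (n - 4))%Z) in *.
  set (a3 := (3 ^ (n - 4))%Z) in *. set (a2 := (2 ^ (n - 4))%Z) in *.
  clearbody a5 a3 a2 n.
  set (F2 := (n * (n - 1))%Z). set (F3 := (F2 * (n - 2))%Z). set (F4 := (F3 * (n - 3))%Z).
  assert (0 <= F2 <= n ^ 2)%Z by (subst F2; nia).
  assert (0 <= F3 <= n ^ 3)%Z by (subst F3; nia).
  assert (0 <= F4 <= n ^ 4)%Z by (subst F4; nia).
  assert (F4 * a2 <= n ^ 4 * a3)%Z by (apply Z.mul_le_mono_nonneg; lia).
  assert (F3 * a3 <= n ^ 3 * a3)%Z by (apply Z.mul_le_mono_nonneg_r; lia).
  assert (0 <= F3 * a2 /\ 0 <= F2 * a3)%Z by (split; apply Z.mul_nonneg_nonneg; lia).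
  assert (F3 + F2 <= n ^ 3 * a3)%Z by nia.
  assert (32 * n ^ 3 * a3 <= n ^ 4 * a3)%Z by (apply Z.mul_le_mono_nonneg_r; nia).
  assert (32 * n * a3 <= n ^ 3 * a3)%Z by (apply Z.mul_le_mono_nonneg_r; nia).
  assert (32 * a3 <= n * a3)%Z by nia.
  clearbody F2 F3 F4. lia.
Qed.

(* With [(sinh x / x) ^ (12/5)] replaced by the lower bound [rpow_12_5_gt], this is the
   positivity of [log_xcoth_gap']. *)
Lemma sinh_cosh_key_ineq x : 0 < x ->
  2 * x ^ 2 * cosh x * (x * cosh x - sinh x) * (2 * x + 3 * sinh x)
  < 5 * sinh x ^ 3 * (sinh x * cosh x - x).
Proof.
  intro Hx.
  pose proof (hyp_sum_pos sinh_cosh_key_terms x 5 sinh_cosh_key_icoef_nonneg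
                ltac:(vm_compute; reflexivity) ltac:(lra)) as H.
  replace (hyp_sum sinh_cosh_key_terms x) with (16 * (5 * sinh x ^ 3 * (sinh x * cosh x - x)
    - 2 * x ^ 2 * cosh x * (x * cosh x - sinh x) * (2 * x + 3 * sinh x))) in H
    by (unfold sinh_cosh_key_terms; hyp_sum_closed_form).
  lra.
Qed.

(** * Elementary bounds for exp and ln *)

Lemma strict_incr_of_derive_pos (f df : R -> R) a b : a < b ->
  (forall c, a <= c <= b -> is_derive f c (df c)) ->
  (forall c, a < c < b -> 0 < df c) -> f a < f b.
Proof.
  intros Hab Hd Hpos.
  destruct (MVT_cor2 f df a b Hab) as [c [Hc Hmid]].
  - intros c Hc. apply is_derive_Reals. auto.
  - specialize (Hpos c Hmid). nra.
Qed.

Lemma ln_le_sub_one z : 0 < z -> ln z <= z - 1.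
Proof. intro Hz. pose proof (exp_ineq1_le (ln z)). rewrite exp_ln in *; lra. Qed.

Lemma exp_le_exp a b : a <= b -> exp a <= exp b.
Proof. intros [Hlt|Heq]; [apply Rlt_le, exp_increasing; exact Hlt|rewrite Heq; lra]. Qed.

Lemma exp_neg_lt_taylor2 s : 0 < s -> exp (- s) < 1 - s + s ^ 2 / 2.
Proof.
  intro Hs.
  apply (strict_incr_of_derive_pos (fun s => 1 - s + s ^ 2 / 2 - exp (- s))
           (fun s => exp (- s) - 1 + s) 0 s) in Hs.
  - rewrite Ropp_0, exp_0 in Hs. lra.
  - intros c _. auto_derive; auto. field.
  - intros c [Hc _]. pose proof (exp_ineq1 (- c)). lra.
Qed.

Lemma exp_neg_gt_taylor3 s : 0 < s -> 1 - s + s ^ 2 / 2 - s ^ 3 / 6 < exp (- s).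
Proof.
  intro Hs.
  apply (strict_incr_of_derive_pos (fun s => exp (- s) - (1 - s + s ^ 2 / 2 - s ^ 3 / 6))
           (fun s => 1 - s + s ^ 2 / 2 - exp (- s)) 0 s) in Hs.
  - rewrite Ropp_0, exp_0 in Hs. lra.
  - intros c _. auto_derive; auto. field.
  - intros c [Hc _]. pose proof (exp_neg_lt_taylor2 c Hc). lra.
Qed.

Lemma ln_one_add_gt t : 0 < t -> t - t ^ 2 / 2 < ln (1 + t).
Proof.
  intro Ht.
  apply (strict_incr_of_derive_pos (fun t => ln (1 + t) - (t - t ^ 2 / 2))
           (fun t => t ^ 2 / (1 + t)) 0 t) in Ht.
  - rewrite Rplus_0_r, ln_1 in Ht. lra.
  - intros c Hc. auto_derive; [lra|]. field. lra.
  - intros c [Hc _]. apply Rdiv_lt_0_compat; nra.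
Qed.

Lemma ln_one_add_lt t : 0 < t -> ln (1 + t) < t - t ^ 2 / 2 + t ^ 3 / 3.
Proof.
  intro Ht.
  apply (strict_incr_of_derive_pos (fun t => t - t ^ 2 / 2 + t ^ 3 / 3 - ln (1 + t))
           (fun t => t ^ 3 / (1 + t)) 0 t) in Ht.
  - rewrite Rplus_0_r, ln_1 in Ht. lra.
  - intros c Hc. auto_derive; [lra|]. field. lra.
  - intros c [Hc _]. apply Rdiv_lt_0_compat; [apply pow_lt|]; lra.
Qed.

Lemma expm1_quot_lt s t : s < t -> 0 < s * t -> (exp s - 1) / s < (exp t - 1) / t.
Proof.
  intros Hst Hsign.
  assert (Hne : forall c, s <= c <= t -> c <> 0) by (intros c Hc ->; nra).
  apply (strict_incr_of_derive_pos (fun y => (exp y - 1) / y)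
           (fun y => (y * exp y - exp y + 1) / y ^ 2) s t Hst).
  - intros c Hc. specialize (Hne c Hc). auto_derive; [auto|]. field. auto.
  - intros c Hc. assert (Hc0 : c <> 0) by (apply Hne; lra).
    apply Rdiv_lt_0_compat; [|apply pow2_gt_0; auto].
    pose proof (exp_ineq1 (- c) ltac:(lra)). pose proof (exp_pos c).
    rewrite exp_Ropp in *. apply Rmult_lt_reg_r with (/ exp c); [apply Rinv_0_lt_compat; lra|].
    replace ((c * exp c - exp c + 1) * / exp c) with (c - 1 + / exp c) by (field; lra). lra.
Qed.

Lemma mul_one_sub_exp_div_lt K a b : K <> 0 -> 0 < a -> a < b ->
  a * (1 - exp (- K / a)) < b * (1 - exp (- K / b)).
Proof.
  intros HK Ha Hab.
  assert (Hquot : forall c, 0 < c -> (exp (- K / c) - 1) / (- K / c) = c * (1 - exp (- K / c)) / K)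
    by (intros c Hc; field; lra).
  destruct (Rdichotomy _ _ HK) as [Hneg|Hpos].
  - pose proof (expm1_quot_lt (- K / b) (- K / a)) as H. rewrite !Hquot in H by lra.
    assert (Hlt : - K / b < - K / a).
    { unfold Rdiv. apply Rmult_lt_compat_l; [lra|]. apply Rinv_lt_contravar; nra. }
    assert (0 < - K / b * (- K / a)) by (apply Rmult_lt_0_compat; apply Rdiv_lt_0_compat; lra).
    specialize (H Hlt ltac:(assumption)). unfold Rdiv in H.
    apply Rmult_lt_reg_r with (- / K); [apply Ropp_0_gt_lt_contravar, Rinv_lt_0_compat; lra|].
    lra.
  - pose proof (expm1_quot_lt (- K / a) (- K / b)) as H. rewrite !Hquot in H by lra.
    assert (Hlt : - K / a < - K / b).
    { assert (K / b < K / a)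
        by (unfold Rdiv; apply Rmult_lt_compat_l; [lra|apply Rinv_lt_contravar; nra]).
      unfold Rdiv in *. lra. }
    assert (0 < - K / a * (- K / b)).
    { replace (- K / a * (- K / b)) with (K / a * (K / b)) by (field; lra).
      apply Rmult_lt_0_compat; apply Rdiv_lt_0_compat; lra. }
    specialize (H Hlt ltac:(assumption)). unfold Rdiv in H.
    apply Rmult_lt_reg_r with (/ K); [apply Rinv_0_lt_compat; lra|]. lra.
Qed.

Lemma exp_mul_lt_convex th a : 0 < th < 1 -> a < 0 -> exp (th * a) < th * exp a + (1 - th).
Proof.
  intros [Hth0 Hth1] Ha.
  apply (strict_incr_of_derive_pos (fun a => exp (th * a) - th * exp a - (1 - th))
           (fun a => th * (exp (th * a) - exp a)) a 0) in Ha.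
  - rewrite Rmult_0_r, exp_0 in Ha. lra.
  - intros c _. auto_derive; auto. field.
  - intros c [_ Hc]. assert (exp c < exp (th * c)) by (apply exp_increasing; nra).
    apply Rmult_lt_0_compat; lra.
Qed.

Lemma one_sub_exp_nested_lt q w : 0 < q -> 0 < w ->
  q * (1 - exp (- ((q + 1) * w))) < (q + 1) * (1 - exp (- (q * (1 - exp (- w))))).
Proof.
  intros Hq Hw.
  apply (strict_incr_of_derive_pos
    (fun w => (q + 1) * (1 - exp (- (q * (1 - exp (- w))))) - q * (1 - exp (- ((q + 1) * w))))
    (fun w => q * (q + 1) * exp (- w) * (exp (- (q * (1 - exp (- w)))) - exp (- (q * w))))
    0 w) in Hw.
  - rewrite !Rmult_0_r, !Ropp_0, !exp_0, !Rminus_eq_0, Rmult_0_r, Ropp_0, exp_0 in Hw. lra.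
  - intros c _. auto_derive; auto.
    replace (exp (- ((q + 1) * c))) with (exp (- c) * exp (- (q * c)))
      by (rewrite <- exp_plus; f_equal; ring).
    replace (1 + - exp (- c)) with (1 - exp (- c)) by ring. ring.
  - intros c [Hc _]. pose proof (exp_pos (- c)). pose proof (exp_ineq1 (- c) ltac:(lra)).
    assert (exp (- (q * c)) < exp (- (q * (1 - exp (- c))))) by (apply exp_increasing; nra).
    apply Rmult_lt_0_compat; [apply Rmult_lt_0_compat; nra|lra].
Qed.

Definition log_sinhc (x : R) : R := ln (sinh x / x).
Definition log_xcoth (x : R) : R := ln (x * cosh x / sinh x).

Lemma sinhc_gt_one x : 0 < x -> 1 < sinh x / x.
Proof.
  intro Hx. pose proof (x_lt_sinh x Hx).
  apply Rmult_lt_reg_r with x; [lra|]. unfold Rdiv. rewrite Rmult_assoc, Rinv_l; lra.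
Qed.

Lemma xcoth_gt_one x : 0 < x -> 1 < x * cosh x / sinh x.
Proof.
  intro Hx. pose proof (x_lt_sinh x Hx). pose proof (sinh_lt_x_mul_cosh x Hx).
  apply Rmult_lt_reg_r with (sinh x); [lra|]. unfold Rdiv. rewrite Rmult_assoc, Rinv_l; lra.
Qed.

Lemma log_sinhc_pos x : 0 < x -> 0 < log_sinhc x.
Proof. intro Hx. rewrite <- ln_1. apply ln_increasing; [lra|]. now apply sinhc_gt_one. Qed.

Lemma log_xcoth_pos x : 0 < x -> 0 < log_xcoth x.
Proof. intro Hx. rewrite <- ln_1. apply ln_increasing; [lra|]. now apply xcoth_gt_one. Qed.

Lemma rpow_12_5_gt S : 1 < S -> 5 * S ^ 3 / (2 + 3 * S) < exp (12 / 5 * ln S).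
Proof.
  intro HS. assert (Hu : 0 < ln S) by (rewrite <- ln_1; apply ln_increasing; lra).
  set (t := exp (2 / 5 * ln S)). assert (Ht : 0 < t) by apply exp_pos.
  assert (Hsplit : exp (12 / 5 * ln S) = S ^ 2 * t).
  { unfold t. replace (12 / 5 * ln S) with (ln S + ln S + 2 / 5 * ln S) by field.
    rewrite !exp_plus, exp_ln by lra. ring. }
  assert (Hinv : / t < 2 / 5 * / S + 3 / 5).
  { pose proof (exp_mul_lt_convex (2 / 5) (- ln S) ltac:(lra) ltac:(lra)) as Hconv.
    rewrite exp_Ropp, exp_ln in Hconv by lra.
    replace (2 / 5 * - ln S) with (- (2 / 5 * ln S)) in Hconv by ring.
    rewrite exp_Ropp in Hconv. fold t in Hconv. lra. }
  assert (Hlt : 5 * S < t * (2 + 3 * S)).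
  { apply Rmult_lt_reg_l with (/ t); [now apply Rinv_0_lt_compat|].
    replace (/ t * (t * (2 + 3 * S))) with (2 + 3 * S) by (field; lra).
    apply Rmult_lt_reg_r with (/ (5 * S)); [apply Rinv_0_lt_compat; lra|].
    replace (/ t * (5 * S) * / (5 * S)) with (/ t) by (field; lra).
    replace ((2 + 3 * S) * / (5 * S)) with (2 / 5 * / S + 3 / 5) by (field; lra). lra. }
  rewrite Hsplit. apply Rmult_lt_reg_r with (2 + 3 * S); [lra|].
  replace (5 * S ^ 3 / (2 + 3 * S) * (2 + 3 * S)) with (S ^ 2 * (5 * S)) by (field; lra).
  apply (Rmult_lt_compat_l (S ^ 2)) in Hlt; [lra|nra].
Qed.

Definition log_xcoth_gap (x : R) : R := 6 / 5 * log_xcoth x - 1 + exp (- (12 / 5) * log_sinhc x).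

Definition log_xcoth_gap' (x : R) : R :=
  6 / 5 * (1 / x + sinh x / cosh x - cosh x / sinh x)
  - 12 / 5 * exp (- (12 / 5) * log_sinhc x) * (cosh x / sinh x - 1 / x).

Lemma is_derive_log_xcoth_gap x : 0 < x -> is_derive log_xcoth_gap x (log_xcoth_gap' x).
Proof.
  intro Hx. pose proof (x_lt_sinh x Hx). pose proof (cosh_pos x).
  unfold log_xcoth_gap, log_xcoth, log_sinhc. unfold sinh at 1 2, cosh at 1. auto_derive.
  - change ((exp x + - exp (- x)) * / 2) with (sinh x).
    change ((exp x + exp (- x)) * / 2) with (cosh x).
    repeat split; try lra; apply Rmult_lt_0_compat; try apply Rinv_0_lt_compat; nra.
  - change ((exp x + - exp (- x)) * / 2) with (sinh x).
    change ((exp x + exp (- x)) * / 2) with (cosh x).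
    replace ((1 * exp x + - (- (1) * exp (- x))) * / 2) with (cosh x) by (unfold cosh; field).
    replace ((1 * exp x + - (1) * exp (- x)) * / 2) with (sinh x) by (unfold sinh; field).
    change (sinh x * / x) with (sinh x / x).
    unfold log_xcoth_gap', log_sinhc. set (W := exp (- (12 / 5) * ln (sinh x / x))).
    field. lra.
Qed.

Lemma log_xcoth_gap'_pos x : 0 < x -> 0 < log_xcoth_gap' x.
Proof.
  intro Hx. pose proof (x_lt_sinh x Hx). pose proof (sinh_lt_x_mul_cosh x Hx).
  pose proof (x_lt_sinh_mul_cosh x Hx). pose proof (cosh_pos x).
  pose proof (sinh_cosh_key_ineq x Hx) as Hkey. pose proof (cosh_sq_sub_sinh_sq x) as Hcs.
  pose proof (rpow_12_5_gt (sinh x / x) (sinhc_gt_one x Hx)) as Hpow.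
  unfold log_xcoth_gap', log_sinhc.
  set (s := sinh x) in *. set (c := cosh x) in *.
  set (V := exp (12 / 5 * ln (s / x))) in *. assert (HV : 0 < V) by apply exp_pos.
  replace (exp (- (12 / 5) * ln (s / x))) with (/ V)
    by (unfold V; rewrite <- exp_Ropp; f_equal; ring).
  set (A := 1 / x - 1 / (s * c)). set (B := c / s - 1 / x).
  replace (1 / x + s / c - c / s) with A.
  2: { unfold A. rewrite <- Hcs. field. lra. }
  assert (HA : 0 < A).
  { replace A with ((s * c - x) / (x * (s * c))) by (unfold A; field; split; lra).
    apply Rdiv_lt_0_compat; nra. }
  assert (HB : 0 < B).
  { replace B with ((x * c - s) / (x * s)) by (unfold B; field; lra).
    apply Rdiv_lt_0_compat; nra. }
  set (L := 5 * (s / x) ^ 3 / (2 + 3 * (s / x))) in *.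
  assert (HkeyAB : 2 * B < L * A).
  { assert (0 < x ^ 3) by (apply pow_lt; lra).
    assert (0 < x ^ 3 * s * c * (2 * x + 3 * s))
      by (apply Rmult_lt_0_compat; [|lra]; apply Rmult_lt_0_compat; [|lra];
          apply Rmult_lt_0_compat; lra).
    apply Rmult_lt_reg_r with (x ^ 3 * s * c * (2 * x + 3 * s)); [assumption|].
    enough (0 < (L * A - 2 * B) * (x ^ 3 * s * c * (2 * x + 3 * s))) by lra.
    replace ((L * A - 2 * B) * (x ^ 3 * s * c * (2 * x + 3 * s)))
      with (5 * s ^ 3 * (s * c - x) - 2 * x ^ 2 * c * (x * c - s) * (2 * x + 3 * s))
      by (unfold L, A, B; field; repeat split; lra).
    lra. }
  assert (2 * B < V * A) by nra.
  enough (12 / 5 * / V * B < 6 / 5 * A) by lra.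
  apply Rmult_lt_reg_l with V; [lra|].
  replace (V * (12 / 5 * / V * B)) with (6 / 5 * (2 * B)) by (field; lra). nra.
Qed.

Lemma cosh_le_one_add_sq y : 0 <= y <= 1 -> cosh y <= 1 + y ^ 2.
Proof.
  intro Hy. pose proof (cosh_sub_one_le y).
  assert (cosh y <= 2).
  { unfold cosh. pose proof (exp_le_exp y 1 ltac:(lra)).
    pose proof (exp_le_exp (- y) 0 ltac:(lra)). rewrite exp_0 in *. pose proof exp_le_3. lra. }
  assert (0 <= y ^ 2 <= 1) by (split; nra). nra.
Qed.

Lemma log_xcoth_gap_ge y : 0 < y <= 1 -> - (12 / 5) * y ^ 2 <= log_xcoth_gap y.
Proof.
  intros Hy. pose proof (x_lt_sinh y ltac:(lra)). pose proof (log_xcoth_pos y ltac:(lra)).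
  assert (Hu : log_sinhc y <= y ^ 2).
  { assert (sinh y / y <= 1 + y ^ 2).
    { apply Rmult_le_reg_r with y; [lra|]. replace (sinh y / y * y) with (sinh y) by (field; lra).
      pose proof (sinh_lt_x_mul_cosh y ltac:(lra)). pose proof (cosh_le_one_add_sq y ltac:(lra)).
      nra. }
    pose proof (sinhc_gt_one y ltac:(lra)). pose proof (ln_le_sub_one (1 + y ^ 2) ltac:(nra)).
    pose proof (ln_le (sinh y / y) (1 + y ^ 2) ltac:(lra) ltac:(assumption)).
    unfold log_sinhc. lra. }
  unfold log_xcoth_gap.
  pose proof (exp_le_exp (- (12 / 5) * y ^ 2) (- (12 / 5) * log_sinhc y) ltac:(lra)).
  pose proof (exp_ineq1_le (- (12 / 5) * y ^ 2)). lra.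
Qed.

Lemma pos_of_strict_incr_ge_neg_sq (f : R -> R) C : 0 < C ->
  (forall y x, 0 < y -> y < x -> f y < f x) ->
  (forall y, 0 < y <= 1 -> - C * y ^ 2 <= f y) ->
  forall x, 0 < x -> 0 < f x.
Proof.
  intros HC Hincr Hlow.
  assert (Hnonneg : forall z, 0 < z -> 0 <= f z).
  { intros z Hz. destruct (Rle_or_lt 0 (f z)) as [|Hneg]; [assumption|exfalso].
    set (y := Rmin (Rmin (z / 2) 1) (- f z / (2 * C))).
    assert (Hy1 : y <= Rmin (z / 2) 1) by apply Rmin_l.
    assert (Hy2 : y <= z / 2) by (eapply Rle_trans; [exact Hy1|apply Rmin_l]).
    assert (Hy3 : y <= 1) by (eapply Rle_trans; [exact Hy1|apply Rmin_r]).
    assert (Hy4 : y <= - f z / (2 * C)) by apply Rmin_r.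
    assert (Hy0 : 0 < y).
    { unfold y. repeat apply Rmin_glb_lt; try lra. apply Rdiv_lt_0_compat; lra. }
    pose proof (Hincr y z Hy0 ltac:(lra)). pose proof (Hlow y (conj Hy0 Hy3)).
    assert (C * y <= - f z / 2).
    { apply Rmult_le_compat_l with (r := C) in Hy4; [|lra].
      replace (C * (- f z / (2 * C))) with (- f z / 2) in Hy4 by (field; lra). lra. }
    assert (y ^ 2 <= y) by nra. nra. }
  intros x Hx. pose proof (Hincr (x / 2) x ltac:(lra) ltac:(lra)).
  pose proof (Hnonneg (x / 2) ltac:(lra)). lra.
Qed.

Lemma log_xcoth_gt x : 0 < x -> 5 / 6 * (1 - exp (- (12 / 5) * log_sinhc x)) < log_xcoth x.
Proof.
  intro Hx.
  enough (0 < log_xcoth_gap x) by (unfold log_xcoth_gap in *; lra).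
  apply (pos_of_strict_incr_ge_neg_sq log_xcoth_gap (12 / 5));
    [lra| |exact log_xcoth_gap_ge|exact Hx].
  intros y z Hy Hyz. apply (strict_incr_of_derive_pos _ log_xcoth_gap' y z Hyz).
  - intros c Hc. apply is_derive_log_xcoth_gap. lra.
  - intros c Hc. apply log_xcoth_gap'_pos. lra.
Qed.

(** * The logarithmic form of the inequality *)

Lemma lhs_lt_one_iff k A B : k < -2 ->
  (2 / (k + 2) * A + k / (k + 2) * B < 1 <-> B < 1 - (-2 / k) * (1 - A)).
Proof.
  intro Hk. assert (Hpos : 0 < k / (k + 2)).
  { replace (k / (k + 2)) with (- k / - (k + 2)) by (field; lra). apply Rdiv_lt_0_compat; lra. }
  assert (E : 2 / (k + 2) * A + k / (k + 2) * B - 1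
              = k / (k + 2) * (B - (1 - (-2 / k) * (1 - A)))) by (field; lra).
  split; intro H; nra.
Qed.

Lemma Rpower_tanhc x p : 0 < x -> Rpower (tanh x / x) p = exp (- (p * log_xcoth x)).
Proof.
  intro Hx. pose proof (x_lt_sinh x Hx). pose proof (cosh_pos x).
  unfold Rpower, log_xcoth, tanh. f_equal.
  replace (sinh x / cosh x / x) with (/ (x * cosh x / sinh x)) by (field; repeat split; lra).
  rewrite ln_Rinv; [ring|]. pose proof (xcoth_gt_one x Hx). lra.
Qed.

Lemma lhs_lt_one_iff_log_form k p x : k < -2 -> 0 < x ->
  (2 / (k + 2) * Rpower (sinh x / x) (k * p) + k / (k + 2) * Rpower (tanh x / x) p < 1
   <-> exp (- (p * log_xcoth x))
       < 1 - (-2 / k) * (1 - exp (- (2 * p * log_sinhc x) / (-2 / k)))).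
Proof.
  intros Hk Hx. rewrite lhs_lt_one_iff, Rpower_tanhc by lra.
  unfold Rpower. fold (log_sinhc x).
  replace (- (2 * p * log_sinhc x) / (-2 / k)) with (k * p * log_sinhc x) by (field; lra).
  reflexivity.
Qed.

Lemma neg_two_div_bounds k : k < -2 -> 0 < -2 / k < 1.
Proof.
  intro Hk. split.
  - replace (-2 / k) with (2 / - k) by (field; lra). apply Rdiv_lt_0_compat; lra.
  - apply Rmult_lt_reg_r with (- k); [lra|]. replace (-2 / k * - k) with 2 by (field; lra). lra.
Qed.

(** * Sufficiency *)

Lemma log_xcoth_le_two_log_sinhc x : 0 < x -> log_xcoth x <= 2 * log_sinhc x.
Proof.
  intro Hx. pose proof (x_lt_sinh x Hx). pose proof (cosh_pos x).
  pose proof (sinhc_gt_one x Hx). pose proof (xcoth_gt_one x Hx).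
  unfold log_xcoth, log_sinhc.
  replace (2 * ln (sinh x / x)) with (ln ((sinh x / x) ^ 2))
    by (rewrite ln_pow by lra; simpl; ring).
  apply ln_le; [lra|].
  apply Rmult_le_reg_r with (x ^ 3 * sinh x); [apply Rmult_lt_0_compat; [apply pow_lt|]; lra|].
  replace (x * cosh x / sinh x * (x ^ 3 * sinh x)) with (x ^ 3 * cosh x * x) by (field; lra).
  replace ((sinh x / x) ^ 2 * (x ^ 3 * sinh x)) with (sinh x ^ 3 * x) by (field; lra).
  apply Rmult_le_compat_r; [lra|]. now apply pow3_mul_cosh_le_sinh_pow3.
Qed.

Lemma log_form_of_neg k p x : k < -2 -> p < 0 -> 0 < x ->
  exp (- (p * log_xcoth x)) < 1 - (-2 / k) * (1 - exp (- (2 * p * log_sinhc x) / (-2 / k))).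
Proof.
  intros Hk Hp Hx. pose proof (log_sinhc_pos x Hx).
  pose proof (log_xcoth_le_two_log_sinhc x Hx).
  set (K := 2 * p * log_sinhc x). assert (HK : K < 0) by (unfold K; nra).
  pose proof (neg_two_div_bounds k Hk) as Hlam.
  pose proof (mul_one_sub_exp_div_lt K (-2 / k) 1 ltac:(lra) ltac:(lra) ltac:(lra)) as Hmono.
  rewrite Rdiv_1_r, Rmult_1_l in Hmono.
  enough (exp (- (p * log_xcoth x)) <= exp (- K)) by lra.
  apply exp_le_exp. unfold K. nra.
Qed.

Lemma threshold_mul_pos k p :
  k < -2 -> - (12 / (5 * (k + 2))) <= p -> 12 <= p * (-5 * (k + 2)).
Proof.
  intros Hk Hp. apply (Rmult_le_compat_r (-5 * (k + 2))) in Hp; [|lra].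
  replace (- (12 / (5 * (k + 2))) * (-5 * (k + 2))) with 12 in Hp by (field; lra). lra.
Qed.

Lemma neg_two_div_le_of_threshold k p : k < -2 -> - (12 / (5 * (k + 2))) <= p ->
  -2 / k <= 5 * p / 6 / (5 * p / 6 + 1).
Proof.
  intros Hk Hp. pose proof (threshold_mul_pos k p Hk Hp). assert (0 < p) by nra.
  apply Rmult_le_reg_r with (- k * (5 * p + 6)); [nra|].
  replace (-2 / k * (- k * (5 * p + 6))) with (2 * (5 * p + 6)) by (field; lra).
  replace (5 * p / 6 / (5 * p / 6 + 1) * (- k * (5 * p + 6))) with (5 * p * - k)
    by (field; lra).
  nra.
Qed.

Lemma log_form_of_large_pos k p x : k < -2 -> - (12 / (5 * (k + 2))) <= p -> 0 < x ->
  exp (- (p * log_xcoth x)) < 1 - (-2 / k) * (1 - exp (- (2 * p * log_sinhc x) / (-2 / k))).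
Proof.
  intros Hk Hp Hx. pose proof (neg_two_div_bounds k Hk) as Hlam.
  pose proof (neg_two_div_le_of_threshold k p Hk Hp) as Hlam_le.
  assert (Hp0 : 0 < p) by (pose proof (threshold_mul_pos k p Hk Hp); nra).
  pose proof (log_sinhc_pos x Hx) as Hu. pose proof (log_xcoth_gt x Hx) as Hv.
  set (u := log_sinhc x) in *. set (v := log_xcoth x) in *.
  set (q := 5 * p / 6) in *. set (w := 12 / 5 * u). set (K := 2 * p * u).
  set (lam0 := q / (q + 1)) in *.
  assert (Hq : 0 < q) by (unfold q; lra). assert (Hw : 0 < w) by (unfold w; lra).
  assert (HK : 0 < K) by (unfold K; nra).
  assert (Hlam0 : 0 < lam0) by (unfold lam0; apply Rdiv_lt_0_compat; lra).
  assert (Hexp_v : exp (- (p * v)) < exp (- (q * (1 - exp (- w))))).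
  { apply exp_increasing. replace (- (12 / 5) * u) with (- w) in Hv by (unfold w; ring).
    unfold q. nra. }
  assert (Hnested : exp (- (q * (1 - exp (- w)))) < 1 - lam0 * (1 - exp (- K / lam0))).
  { pose proof (one_sub_exp_nested_lt q w Hq Hw).
    replace (- K / lam0) with (- ((q + 1) * w)) by (unfold K, lam0, q, w; field; lra).
    apply Rmult_lt_reg_l with (q + 1); [lra|].
    replace ((q + 1) * (1 - lam0 * (1 - exp (- ((q + 1) * w)))))
      with (q + 1 - q * (1 - exp (- ((q + 1) * w)))) by (unfold lam0; field; lra).
    lra. }
  assert (Hmono : -2 / k * (1 - exp (- K / (-2 / k))) <= lam0 * (1 - exp (- K / lam0))).
  { destruct Hlam_le as [Hlt|Heq]; [|rewrite Heq; lra].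
    apply Rlt_le, mul_one_sub_exp_div_lt; lra. }
  lra.
Qed.

(** * Necessity *)

Definition sinhc_taylor (z : R) : R := z / 6 + z ^ 2 / 120.
Definition xcoth_taylor (z : R) : R := z / 3 - z ^ 2 / 45 + z ^ 3 / 45.
Definition log_sinhc_lower (z : R) : R := sinhc_taylor z - sinhc_taylor z ^ 2 / 2.
Definition log_xcoth_upper (z : R) : R :=
  xcoth_taylor z - xcoth_taylor z ^ 2 / 2 + xcoth_taylor z ^ 3 / 3.

Lemma sinhc_taylor_pos z : 0 < z -> 0 < sinhc_taylor z.
Proof. intro Hz. unfold sinhc_taylor. nra. Qed.

Lemma xcoth_taylor_pos z : 0 < z -> 0 < xcoth_taylor z.
Proof. intro Hz. unfold xcoth_taylor. nra. Qed.

Lemma log_sinhc_ge x : 0 < x -> log_sinhc_lower (x ^ 2) <= log_sinhc x.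
Proof.
  intro Hx. pose proof (sinh_ge_taylor5 x Hx).
  pose proof (sinhc_taylor_pos (x ^ 2) ltac:(nra)) as Ht.
  assert (Hle : 1 + sinhc_taylor (x ^ 2) <= sinh x / x).
  { apply Rmult_le_reg_r with x; [lra|]. replace (sinh x / x * x) with (sinh x) by (field; lra).
    unfold sinhc_taylor. lra. }
  pose proof (ln_le (1 + sinhc_taylor (x ^ 2)) _ ltac:(lra) Hle).
  pose proof (ln_one_add_gt _ Ht).
  unfold log_sinhc_lower, log_sinhc. lra.
Qed.

Lemma log_xcoth_le x : 0 < x -> log_xcoth x <= log_xcoth_upper (x ^ 2).
Proof.
  intro Hx. pose proof (xcosh_le_sinh_mul_poly x Hx). pose proof (x_lt_sinh x Hx).
  pose proof (xcoth_taylor_pos (x ^ 2) ltac:(nra)) as Hr.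
  assert (Hle : x * cosh x / sinh x <= 1 + xcoth_taylor (x ^ 2)).
  { apply Rmult_le_reg_r with (sinh x); [lra|].
    replace (x * cosh x / sinh x * sinh x) with (x * cosh x) by (field; lra).
    unfold xcoth_taylor. lra. }
  pose proof (xcoth_gt_one x Hx).
  pose proof (ln_le (x * cosh x / sinh x) _ ltac:(lra) Hle).
  pose proof (ln_one_add_lt _ Hr).
  unfold log_xcoth_upper, log_xcoth. lra.
Qed.

(* On [[0, 1]] powers of [z] decrease; recording this lets [lra] bound high-degree
   monomials by low-degree ones. *)
Ltac pow_chain z n :=
  let rec go k := match k with
    | O => idtac
    | S ?k' => assert (0 <= z ^ (S k')) by (apply pow_le; lra);
               assert (z ^ (S (S k')) <= z ^ (S k')) by (simpl; nra);
               go k' end in go n.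

Lemma log_taylor_gap_ge z : 0 <= z <= 1 ->
  z ^ 2 / 15 - z ^ 3 / 10 <= 2 * log_sinhc_lower z - log_xcoth_upper z.
Proof.
  intro Hz. unfold log_sinhc_lower, log_xcoth_upper, sinhc_taylor, xcoth_taylor.
  pow_chain z 10%nat. ring_simplify. lra.
Qed.

Lemma log_xcoth_upper_sq_ge z : 0 <= z <= 1 -> z ^ 2 / 9 - z ^ 3 / 15 <= log_xcoth_upper z ^ 2.
Proof.
  intro Hz. unfold log_xcoth_upper, xcoth_taylor. pow_chain z 18%nat. ring_simplify. lra.
Qed.

Lemma log_xcoth_upper_bounds z : 0 < z <= 1 -> 0 < log_xcoth_upper z <= z / 2.
Proof.
  intro Hz. unfold log_xcoth_upper, xcoth_taylor. pow_chain z 10%nat.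
  assert (0 < z ^ 2) by nra. split; ring_simplify; lra.
Qed.

Lemma log_sinhc_lower_bounds z : 0 < z <= 1 ->
  0 < log_sinhc_lower z /\ log_sinhc_lower z ^ 2 <= z ^ 2 / 36 + z ^ 3 / 300.
Proof.
  intro Hz. unfold log_sinhc_lower, sinhc_taylor. pow_chain z 10%nat. split; ring_simplify; lra.
Qed.

Definition taylor_gap (k p z : R) : R :=
  2 * log_sinhc_lower z - log_xcoth_upper z + k * p * log_sinhc_lower z ^ 2
  + p * log_xcoth_upper z ^ 2 / 2 - p ^ 2 * log_xcoth_upper z ^ 3 / 6.

(* Up to [O(z ^ 3)], [taylor_gap k p z] is [(1/15 + p (k + 2) / 36) z ^ 2]. *)
Lemma taylor_gap_nonneg k p z : k < -2 -> 0 < p -> 0 < z <= 1 ->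
  z * (1 / 10 + p / 30 + p ^ 2 / 48 - k * p / 300) <= 1 / 15 + p * (k + 2) / 36 ->
  0 <= taylor_gap k p z.
Proof.
  intros Hk Hp Hz Hsmall. unfold taylor_gap.
  pose proof (log_taylor_gap_ge z ltac:(lra)).
  pose proof (log_xcoth_upper_sq_ge z ltac:(lra)).
  destruct (log_xcoth_upper_bounds z Hz) as [HV0 HV].
  destruct (log_sinhc_lower_bounds z Hz) as [HU0 HU].
  set (V := log_xcoth_upper z) in *. set (U := log_sinhc_lower z) in *.
  assert (V ^ 3 <= z ^ 3 / 8).
  { replace (z ^ 3 / 8) with ((z / 2) ^ 3) by field. apply pow_incr. lra. }
  assert (p * (z ^ 2 / 9 - z ^ 3 / 15) / 2 <= p * V ^ 2 / 2).
  { apply Rmult_le_compat_r; [lra|]. apply Rmult_le_compat_l; lra. }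
  assert (p ^ 2 * V ^ 3 / 6 <= p ^ 2 * (z ^ 3 / 8) / 6).
  { apply Rmult_le_compat_r; [lra|]. apply Rmult_le_compat_l; [nra|lra]. }
  assert (k * p * (z ^ 2 / 36 + z ^ 3 / 300) <= k * p * U ^ 2).
  { apply Rmult_le_compat_neg_l; [nra|lra]. }
  assert (0 <= z ^ 2 * ((1 / 15 + p * (k + 2) / 36)
                        - z * (1 / 10 + p / 30 + p ^ 2 / 48 - k * p / 300)))
    by (apply Rmult_le_pos; nra).
  nra.
Qed.

Lemma log_form_fails_of_taylor_gap k p x : k < -2 -> 0 < p -> 0 < x -> x ^ 2 <= 1 ->
  0 <= taylor_gap k p (x ^ 2) ->
  1 - (-2 / k) * (1 - exp (- (2 * p * log_sinhc x) / (-2 / k))) <= exp (- (p * log_xcoth x)).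
Proof.
  intros Hk Hp Hx Hx1 Hgap. unfold taylor_gap in Hgap.
  pose proof (neg_two_div_bounds k Hk) as Hlam.
  pose proof (log_sinhc_ge x Hx). pose proof (log_xcoth_le x Hx).
  destruct (log_xcoth_upper_bounds (x ^ 2) ltac:(nra)) as [HV0 _].
  destruct (log_sinhc_lower_bounds (x ^ 2) ltac:(nra)) as [HU0 _].
  replace (- (2 * p * log_sinhc x) / (-2 / k)) with (k * p * log_sinhc x) by (field; lra).
  set (u := log_sinhc x) in *. set (v := log_xcoth x) in *.
  set (U := log_sinhc_lower (x ^ 2)) in *. set (V := log_xcoth_upper (x ^ 2)) in *.
  assert (Hv : 1 - p * V + (p * V) ^ 2 / 2 - (p * V) ^ 3 / 6 <= exp (- (p * v))).
  { pose proof (exp_neg_gt_taylor3 (p * V) ltac:(nra)).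
    pose proof (exp_le_exp (- (p * V)) (- (p * v)) ltac:(nra)). lra. }
  assert (Hkp : 0 < - k * p) by nra.
  assert (Hu : exp (k * p * u) <= 1 + k * p * U + (k * p * U) ^ 2 / 2).
  { pose proof (exp_neg_lt_taylor2 (- (k * p * U)) ltac:(nra)) as Htaylor.
    rewrite Ropp_involutive in Htaylor.
    pose proof (exp_le_exp (k * p * u) (k * p * U) ltac:(nra)). lra. }
  assert (Hlam_u : -2 / k * exp (k * p * u) <= -2 / k * (1 + k * p * U + (k * p * U) ^ 2 / 2))
    by (apply Rmult_le_compat_l; lra).
  replace (-2 / k * (1 + k * p * U + (k * p * U) ^ 2 / 2))
    with (-2 / k - 2 * p * U - k * p ^ 2 * U ^ 2) in Hlam_u by (field; lra).
  assert (0 <= p * (2 * U - V + k * p * U ^ 2 + p * V ^ 2 / 2 - p ^ 2 * V ^ 3 / 6))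
    by (apply Rmult_le_pos; lra).
  nra.
Qed.

Lemma log_form_fails_for_small_pos k p : k < -2 -> 0 < p -> p < - (12 / (5 * (k + 2))) ->
  exists x, 0 < x /\
  1 - (-2 / k) * (1 - exp (- (2 * p * log_sinhc x) / (-2 / k))) <= exp (- (p * log_xcoth x)).
Proof.
  intros Hk Hp Hthr.
  set (c2 := 1 / 15 + p * (k + 2) / 36). set (c3 := 1 / 10 + p / 30 + p ^ 2 / 48 - k * p / 300).
  assert (Hc2 : 0 < c2).
  { apply (Rmult_lt_compat_r (-5 * (k + 2))) in Hthr; [|lra].
    replace (- (12 / (5 * (k + 2))) * (-5 * (k + 2))) with 12 in Hthr by (field; lra).
    unfold c2. lra. }
  assert (Hc3 : 0 < c3) by (unfold c3; nra).
  set (z := Rmin 1 (c2 / c3)).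
  assert (Hz1 : z <= 1) by apply Rmin_l.
  assert (Hz0 : 0 < z) by (apply Rmin_glb_lt; [lra|apply Rdiv_lt_0_compat; lra]).
  assert (Hzc : z * c3 <= c2).
  { pose proof (Rmin_r 1 (c2 / c3)) as Hz. fold z in Hz.
    apply Rmult_le_compat_r with (r := c3) in Hz; [|lra].
    replace (c2 / c3 * c3) with c2 in Hz by (field; lra). lra. }
  exists (sqrt z). assert (Hx : 0 < sqrt z) by (apply sqrt_lt_R0; lra).
  assert (Hxz : sqrt z ^ 2 = z) by (rewrite <- Rsqr_pow2; apply Rsqr_sqrt; lra).
  split; [exact Hx|].
  apply log_form_fails_of_taylor_gap; [assumption|assumption|exact Hx|rewrite Hxz; lra|].
  rewrite Hxz. apply taylor_gap_nonneg; auto.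
Qed.

Theorem theorem3p4 (k p : R) (hk : k < -2) (hp : p <> 0) :
  (forall x : R, 0 < x ->
     2 / (k + 2) * Rpower (sinh x / x) (k * p)
     + k / (k + 2) * Rpower (tanh x / x) p < 1)
  <-> (p < 0 \/ p >= - (12 / (5 * (k + 2)))).
Proof.
  split.
  - intro Hall. destruct (Rlt_or_le p 0) as [Hneg|Hnonneg]; [now left|right].
    apply Rnot_lt_ge. intro Hsmall.
    destruct (log_form_fails_for_small_pos k p hk ltac:(lra) Hsmall) as [x [Hx Hfail]].
    specialize (Hall x Hx). rewrite lhs_lt_one_iff_log_form in Hall by assumption. lra.
  - intros Hp x Hx. apply lhs_lt_one_iff_log_form; [exact hk|exact Hx|].
    destruct Hp as [Hneg|Hlarge]; [apply log_form_of_neg|apply log_form_of_large_pos]; lra.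
Qed.
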